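(* Let $d\in\mathbb{N}$ and let $\mathcal{P}$ be a partition of $\mathbb{R}^{d}$. Suppose there exists $D\in(0,\infty)$ such that $\operatorname{diam}(X)\leq D$ for all $X\in\mathcal{P}$, and let $\epsilon\in(0,\infty)$ be such that $|\mathcal{N}_{\epsilon}(\vec{p})|\leq 2^{d}$ for all $\vec{p}\in\mathbb{R}^{d}$. Then $\epsilon\leq\frac{D}{2}$.
   Context: On $\mathbb{R}^d$ use $d_{max}(\vec{x},\vec{y})=\max_i|x_i-y_i|$; $\operatorname{diam}(X)=\sup\{d_{max}(\vec{x},\vec{y}):\vec{x},\vec{y}\in X\}$; $\overline{B}_{\epsilon}(\vec{p})=\{\vec{x}: d_{max}(\vec{x},\vec{p})\le\epsilon\}$; $\mathcal{N}_{\epsilon}(\vec{p})=\{X\in\mathcal{P}: X\cap\overline{B}_{\epsilon}(\vec{p})\neq\emptyset\}$. *)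

From HB Require Import structures.
From mathcomp Require Import all_boot all_order all_algebra.
From mathcomp Require Import all_classical all_reals.
From mathcomp Require Import ereal.
Set Implicit Arguments. Unset Strict Implicit. Unset Printing Implicit Defensive.
Import Order.TTheory GRing.Theory Num.Theory.
Local Open Scope classical_set_scope.
Local Open Scope ring_scope.

Section Defs.
Variables (R : realType) (d : nat).
Local Notation T := 'rV[R]_d.

Definition dmax (x y : T) : R := \big[Num.max/0]_(i < d) `|x ord0 i - y ord0 i|.

Definition diam (X : set T) : \bar R :=
  ereal_sup [set r | exists x y, X x /\ X y /\ r = (dmax x y)%:E].

Definition cball (eps : R) (p : T) : set T := [set x | dmax x p <= eps].

Definition Neps (P : set (set T)) (eps : R) (p : T) : set (set T) :=
  [set X | P X /\ X `&` cball eps p !=set0].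

Definition is_partition (P : set (set T)) : Prop :=
  (forall X, P X -> X !=set0) /\
  (forall X Y, P X -> P Y -> X `&` Y !=set0 -> X = Y) /\
  (forall x : T, exists X, P X /\ X x).
End Defs.

From HB Require Import structures.
From mathcomp Require Import all_boot all_order all_algebra.
From mathcomp Require Import all_classical all_reals.
From mathcomp Require Import ereal lra.
Import Order.TTheory GRing.Theory Num.Theory.
Local Open Scope classical_set_scope.
Local Open Scope ring_scope.

(* A block X of diameter at most D lies in the closed d_max-ball of radius D/2
   about some centre m (take coordinatewise suprema of X, minus D/2).  If
   eps > D/2, the 2^d corners of the eps-cube about m lie outside X and are
   pairwise at distance 2 eps > D, so they lie in 2^d distinct blocks other
   than X.  With X these are 2^d + 1 blocks meeting the eps-ball about m. *)

Lemma leq_card_II {I : finType} {U : Type} {A : set U} {n : nat} {f : I -> U} :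
  injective f -> (forall i, A (f i)) -> (A #<= `I_n)%card -> (#|I| <= n)%N.
Proof.
move=> finj fA /pcard_leP/injfunPex[g gA ginj].
have gf_inj : injective (g \o f).
  by move=> i j /ginj; rewrite !inE => /(_ (fA i) (fA j))/finj.
rewrite cardE -(size_map (g \o f)) -(size_iota 0 n); apply: uniq_leq_size.
  by rewrite map_inj_uniq ?enum_uniq.
by move=> _ /mapP[i _ ->]; rewrite mem_iota; apply: gA.
Qed.

Section Dmax.
Context {R : realType} {d : nat}.
Local Notation T := 'rV[R]_d.

Lemma dmax_ge0 (x y : T) : 0 <= dmax x y.
Proof. by rewrite /dmax; elim/big_ind: _ => // a b; rewrite le_max => ->. Qed.

Lemma dist_le_dmax (x y : T) i : `|x ord0 i - y ord0 i| <= dmax x y.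
Proof. by rewrite /dmax (bigD1 i) //= le_max lexx. Qed.

Lemma dmax_le (x y : T) r :
  0 <= r -> (forall i, `|x ord0 i - y ord0 i| <= r) -> dmax x y <= r.
Proof.
move=> r_ge0 xy_r; rewrite /dmax; elim/big_ind: _ => // a b.
by rewrite ge_max => -> ->.
Qed.

Lemma dmax_le_diam {X : set T} {D x y} :
  (diam X <= D%:E)%E -> X x -> X y -> dmax x y <= D.
Proof.
move=> XD Xx Xy; rewrite -lee_fin; apply: le_trans XD.
by apply: ereal_sup_ubound; exists x, y.
Qed.

Lemma sub_cball_half_diam {X : set T} {D x0} :
  (diam X <= D%:E)%E -> X x0 -> exists m, X `<=` cball (D / 2) m.
Proof.
move=> XD Xx0.
pose S i := [set x ord0 i | x in X].
have S_ub i x : X x -> ubound (S i) (x ord0 i + D).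
  move=> Xx _ [y Xy <-].
  have := le_trans (dist_le_dmax y x i) (dmax_le_diam XD Xy Xx).
  by rewrite distrC ler_distlC => /andP[_].
have S_sup i : has_sup (S i).
  by split; [exists (x0 ord0 i); exists x0 | exists (x0 ord0 i + D); apply: S_ub].
have D_ge0 : 0 <= D by apply: le_trans (dmax_ge0 x0 x0) (dmax_le_diam XD Xx0 Xx0).
exists (\row_i (sup (S i) - D / 2)) => x Xx; apply: dmax_le => [|i]; first lra.
have x_le_sup : x ord0 i <= sup (S i) by apply: sup_upper_bound => //; exists x.
have sup_le : sup (S i) <= x ord0 i + D.
  by apply: ge_sup; [exists (x ord0 i); exists x | apply: S_ub].
rewrite mxE ler_distlC; apply/andP; split; lra.
Qed.

Definition corner (m : T) (eps : R) (s : {ffun 'I_d -> bool}) : T :=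
  \row_i (m ord0 i + (if s i then eps else - eps)).

Lemma dist_corner m eps s i : `|corner m eps s ord0 i - m ord0 i| = `|eps|.
Proof. by rewrite mxE addrAC subrr add0r; case: (s i); rewrite ?normrN. Qed.

Lemma corner_in_cball m eps s : 0 <= eps -> cball eps m (corner m eps s).
Proof. by move=> eps_ge0; apply: dmax_le => // i; rewrite dist_corner ger0_norm. Qed.

Lemma corner_notin_cball m eps s r :
  (0 < d)%N -> r < eps -> ~ cball r m (corner m eps s).
Proof.
move=> d_gt0 r_lt_eps corner_r.
have := le_trans (dist_le_dmax _ _ (Ordinal d_gt0)) corner_r.
by rewrite dist_corner; have := ler_norm eps; lra.
Qed.

Lemma dmax_corner_neq m eps s s' :
  s != s' -> eps *+ 2 <= dmax (corner m eps s) (corner m eps s').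
Proof.
move=> s_neq; have [i si_neq] : exists i, s i != s' i.
  apply/existsP; apply: contraNT s_neq => /existsPn s_eq.
  by apply/eqP/ffunP => i; apply/eqP/negPn/s_eq.
apply: le_trans (dist_le_dmax _ _ i); rewrite !mxE.
case: (s i) (s' i) si_neq => -[] //= _; [|rewrite distrC];
  by apply: le_trans (ler_norm _); lra.
Qed.
End Dmax.

Lemma blocks_near_corners {R : realType} {d : nat} {P : set (set 'rV[R]_d)}
    {D eps : R} :
  (0 < d)%N -> (forall x, exists X, P X /\ X x) ->
  (forall X, P X -> (diam X <= D%:E)%E) -> D / 2 < eps ->
  exists p, exists2 F : option {ffun 'I_d -> bool} -> set 'rV[R]_d,
    injective F & forall o, Neps P eps p (F o).
Proof.
move=> d_gt0 /choice[block block_spec] P_diam half_D_lt_eps.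
have [PX0 X0_0] := block_spec 0.
have [m X0_sub] := sub_cball_half_diam (P_diam _ PX0) X0_0.
have D_ge0 : 0 <= D.
  exact: le_trans (dmax_ge0 0 0) (dmax_le_diam (P_diam _ PX0) X0_0 X0_0).
have eps_ge0 : 0 <= eps by lra.
pose Y s := block (corner m eps s).
have Y_neq_X0 s : Y s <> block 0.
  move=> Ys_X0; apply: (corner_notin_cball _ _ s _ d_gt0 half_D_lt_eps).
  by apply: X0_sub; rewrite -Ys_X0; apply: (block_spec _).2.
have Y_inj : injective Y.
  move=> s s' Y_eq; apply/eqP/negPn/negP => s_neq.
  have := dmax_corner_neq m eps _ _ s_neq.
  have [PYs Ys_s] := block_spec (corner m eps s).
  have Ys_s' : Y s (corner m eps s') by rewrite Y_eq; apply: (block_spec _).2.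
  have := dmax_le_diam (P_diam _ PYs) Ys_s Ys_s'; lra.
exists m, (fun o => if o is Some s then Y s else block 0).
- case=> [s|] [s'|] //= Y_eq.
  + by rewrite (Y_inj _ _ Y_eq).
  + by case: (Y_neq_X0 s).
  + by case: (Y_neq_X0 s').
- case=> [s|] /=; split.
  + exact: (block_spec _).1.
  + by exists (corner m eps s); split; [apply: (block_spec _).2 | apply: corner_in_cball].
  + exact: PX0.
  + by exists 0; split => //; apply: le_trans (X0_sub _ X0_0) _; lra.
Qed.

Theorem mainTheorem8 (R : realType) (d : nat) (P : set (set 'rV[R]_d))
  (D eps : R) :
  (1 <= d)%N ->
  is_partition P ->
  0 < D ->
  (forall X, P X -> (diam X <= D%:E)%E) ->
  0 < eps ->
  (forall p : 'rV[R]_d, (Neps P eps p #<= `I_(2 ^ d))%card) ->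
  eps <= D / 2.
Proof.
move=> d_gt0 [_ [_ P_cover]] _ P_diam _ Neps_small.
rewrite leNgt; apply/negP => half_D_lt_eps.
have [p [F F_inj F_Neps]] := blocks_near_corners d_gt0 P_cover P_diam half_D_lt_eps.
have := leq_card_II F_inj F_Neps (Neps_small p).
by rewrite card_option card_ffun card_bool card_ord ltnn.
Qed.
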